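(* Let $p$ be an odd prime and $A\subseteq \mathbb{F}_p$. Then \[ \left| T(A) - \left( \frac{|A|^6}{p} + 2 |A|^4 \right) \right| \leq p\, |A|^3. \]
   Context: $\mathbb{F}_p$ is the field with $p$ elements. A line means an affine line in $\mathbb{F}_p^2$. For a line $\ell$, $i(\ell)$ denotes the number of points of $A\times A$ lying on $\ell$, and $T(A)=\sum_{\text{all lines } \ell} i(\ell)^3$ is the number of collinear triples in $A\times A$. *)

From HB Require Import structures.
From mathcomp Require Import all_boot all_order all_algebra.
Set Implicit Arguments. Unset Strict Implicit. Unset Printing Implicit Defensive.
Import Order.TTheory GRing.Theory Num.Theory.
Local Open Scope ring_scope.

Definition line_through (F : finFieldType) (a v : F * F) : {set F * F} :=
  [set (a.1 + t * v.1, a.2 + t * v.2) | t : F].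

(* The set of all affine lines of F^2 (each line counted once, as a point set). *)
Definition lines (F : finFieldType) : {set {set F * F}} :=
  [set L : {set F * F} | [exists a : F * F, exists v : F * F,
      (v != (0, 0)) && (L == line_through a v)]].

Definition incid (F : finFieldType) (A : {set F}) (L : {set F * F}) : nat :=
  #|L :&: setX A A|.

Definition collinear_triples (F : finFieldType) (A : {set F}) : nat :=
  (\sum_(L in lines F) (incid A L) ^ 3)%N.

From HB Require Import structures.
From mathcomp Require Import all_boot all_order all_algebra.
From mathcomp Require Import ring lra.
Import Order.TTheory GRing.Theory Num.Theory.
Local Open Scope ring_scope.

Set Implicit Arguments.
Unset Strict Implicit.
Unset Printing Implicit Defensive.

(* A line of F_q^2 is either vertical, x = c, or a graph y = m x + c.  The q
   vertical lines contribute |A| * |A|^3 to T(A); for the q^2 graphs write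
   g(m, c) = #{x in A | m x + c in A}.  Counting pairs and triples of points of
   A x A gives the first two moments exactly: sum g = q |A|^2 and
   sum g^2 = q |A|^2 + |A|^4 - |A|^3, because two points with distinct abscissae
   lie on exactly one graph.  Since 0 <= g <= |A|, the pointwise inequalities
   0 <= (q g - |A|^2)^2 g  and  0 <= (q g - |A|^2)^2 (|A| - g) control the
   third moment sum g^3 from both sides up to an error q |A|^3. *)

Lemma sum_mem_card (T : finType) (P : {set T}) : (\sum_i (i \in P))%N = #|P|.
Proof. by rewrite -sum1_card [RHS]big_mkcond; apply: eq_bigr => i _; case: (i \in P). Qed.

Section SumCubes.

Variables (R : realFieldType) (I : finType) (u : I -> R) (q N : R).
Hypotheses (u_ge0 : forall i, 0 <= u i) (u_leN : forall i, u i <= N).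

Let S k := \sum_i u i ^+ k.

Lemma sumr_cubic (a b c d : R) :
  \sum_i (a * u i ^+ 3 + b * u i ^+ 2 + c * u i + d) =
  a * S 3 + b * S 2 + c * S 1 + d * #|I|%:R.
Proof. by rewrite /S !big_split /= -!mulr_sumr sumr_const mulr_natr. Qed.

Lemma sum_cubes_lower : 2 * q * N ^+ 2 * S 2 - N ^+ 4 * S 1 <= q ^+ 2 * S 3.
Proof.
have : 0 <= \sum_i (q * u i - N ^+ 2) ^+ 2 * u i.
  by apply: sumr_ge0 => i _; rewrite mulr_ge0 ?sqr_ge0.
rewrite (eq_bigr (fun i => q ^+ 2 * u i ^+ 3 + (- 2 * q * N ^+ 2) * u i ^+ 2
                          + N ^+ 4 * u i + 0)) => [|i _]; last by ring.
rewrite sumr_cubic; lra.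
Qed.

Lemma sum_cubes_upper :
  q ^+ 2 * S 3 + (N ^+ 4 + 2 * q * N ^+ 3) * S 1 <=
  (2 * q * N ^+ 2 + N * q ^+ 2) * S 2 + N ^+ 5 * #|I|%:R.
Proof.
have : 0 <= \sum_i (q * u i - N ^+ 2) ^+ 2 * (N - u i).
  by apply: sumr_ge0 => i _; rewrite mulr_ge0 ?sqr_ge0 ?subr_ge0.
rewrite (eq_bigr (fun i => - q ^+ 2 * u i ^+ 3 + (2 * q * N ^+ 2 + N * q ^+ 2) * u i ^+ 2
                          + (- (N ^+ 4 + 2 * q * N ^+ 3)) * u i + N ^+ 5)) => [|i _]; last by ring.
rewrite sumr_cubic; lra.
Qed.

Hypotheses (q_gt0 : 0 < q) (N_ge0 : 0 <= N) (N_leq : N <= q).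
Hypotheses (card_I : #|I|%:R = q ^+ 2) (S1E : S 1 = q * N ^+ 2)
           (S2E : S 2 = q * N ^+ 2 + N ^+ 4 - N ^+ 3).

Lemma sum_cubes_near_mean : `|S 3 - (N ^+ 6 / q + N ^+ 4)| <= q * N ^+ 3.
Proof.
have lo := sum_cubes_lower; have up := sum_cubes_upper.
rewrite S1E S2E card_I in lo up.
have q2_gt0 : 0 < q ^+ 2 by rewrite exprn_gt0.
have -> : S 3 - (N ^+ 6 / q + N ^+ 4) = (q ^+ 2 * S 3 - q * N ^+ 6 - q ^+ 2 * N ^+ 4) / q ^+ 2.
  by field; rewrite gt_eqF.
rewrite normf_div (gtr0_norm q2_gt0) ler_pdivrMr // ler_norml.
(* the slack in the lower bound is (q - N)(q + 2 N) >= 0 times q N^3 *)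
have q_ge0 := ltW q_gt0.
have slack_ge0 : 0 <= q * N ^+ 3 * (q - N) * (q + 2 * N).
  by rewrite !mulr_ge0 ?exprn_ge0 ?subr_ge0 ?addr_ge0 ?mulr_ge0 ?ler0n.
have qN5_ge0 : 0 <= q * N ^+ 5 by rewrite mulr_ge0 ?exprn_ge0.
apply/andP; split; nra.
Qed.

End SumCubes.

Section Lines.

Variables (F : finFieldType) (A : {set F}).

Definition vline (c : F) : {set F * F} := [set (c, y) | y : F].
Definition graph_line (m c : F) : {set F * F} := [set (x, m * x + c) | x : F].

Lemma mem_vline c x y : ((x, y) \in vline c) = (x == c).
Proof. by apply/imsetP/eqP => [[y' _ [-> _]] // | ->]; exists y. Qed.

Lemma mem_graph_line m c x y : ((x, y) \in graph_line m c) = (y == m * x + c).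
Proof. by apply/imsetP/eqP => [[x' _ [-> ->]] // | ->]; exists x. Qed.

Lemma mem_line_through (a v : F * F) x y :
  ((x, y) \in line_through a v) <-> exists t, x = a.1 + t * v.1 /\ y = a.2 + t * v.2.
Proof.
split => [/imsetP [t _ [-> ->]] | [t [-> ->]]]; first by exists t.
by apply/imsetP; exists t.
Qed.

Lemma line_through_lines a (v : F * F) : v != (0, 0) -> line_through a v \in lines F.
Proof.
move=> v_neq0; rewrite inE; apply/existsP; exists a; apply/existsP; exists v.
by rewrite v_neq0 eqxx.
Qed.

Lemma line_through_vertical a v2 : v2 != 0 -> line_through a (0, v2) = vline a.1.
Proof.
move=> v2_neq0; apply/setP => -[x y]; rewrite mem_vline; apply/idP/eqP.
- by case/mem_line_through => t [-> _] /=; rewrite mulr0 addr0.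
- move=> ->; apply/mem_line_through; exists ((y - a.2) / v2) => /=.
  by rewrite mulr0 addr0 divfK // addrC subrK.
Qed.

Lemma line_through_graph a (v : F * F) : v.1 != 0 ->
  line_through a v = graph_line (v.2 / v.1) (a.2 - v.2 / v.1 * a.1).
Proof.
move=> v1_neq0; apply/setP => -[x y]; rewrite mem_graph_line; apply/idP/eqP.
- by case/mem_line_through => t [-> ->] /=; field.
- move=> ->; apply/mem_line_through; exists ((x - a.1) / v.1).
  by split; [rewrite divfK // addrC subrK | field].
Qed.

Lemma linesE :
  lines F = [set vline c | c : F] :|: [set graph_line mc.1 mc.2 | mc : F * F].
Proof.
apply/setP => L; apply/idP/idP.
- rewrite inE => /existsP [a /existsP [[v1 v2] /andP [v_neq0 /eqP ->]]].
  apply/setUP; have [v1_0 | v1_neq0] := eqVneq v1 0.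
  + left; rewrite v1_0 line_through_vertical ?imset_f //.
    by move: v_neq0; rewrite v1_0 xpair_eqE eqxx.
  + right; rewrite line_through_graph //=.
    by apply/imsetP; exists (v2 / v1, a.2 - v2 / v1 * a.1).
- case/setUP => /imsetP [c _ ->].
  + rewrite (_ : vline c = line_through (c, 0) (0, 1)).
      by apply: line_through_lines; rewrite xpair_eqE oner_eq0 andbF.
    by rewrite line_through_vertical ?oner_neq0.
  + have -> : graph_line c.1 c.2 = line_through (0, c.2) (1, c.1).
      by rewrite line_through_graph ?oner_neq0 //= divr1 mulr0 subr0.
    by apply: line_through_lines; rewrite xpair_eqE oner_eq0.
Qed.

Lemma vline_inj : injective vline.
Proof. by move=> c1 c2 /setP /(_ (c1, 0)); rewrite !mem_vline eqxx => /esym/eqP. Qed.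

Lemma graph_line_inj : injective (fun mc : F * F => graph_line mc.1 mc.2).
Proof.
move=> [m1 c1] [m2 c2] /= /setP E.
have := E (0, c1); rewrite !mem_graph_line !mulr0 !add0r eqxx => /esym/eqP c12.
have := E (1, m1 + c1); rewrite !mem_graph_line !mulr1 eqxx -c12 => /esym/eqP/addIr m12.
by rewrite m12 c12.
Qed.

Lemma vline_neq_graph_line c m d : vline c != graph_line m d.
Proof.
apply/negP => /eqP /setP E.
have := E (c, 0); have := E (c, 1); rewrite !mem_vline !mem_graph_line eqxx /=.
by move=> /esym/eqP <- /esym/eqP/eqP; rewrite eq_sym oner_eq0.
Qed.

Definition graph_count (m c : F) : nat := (\sum_(x in A) ((m * x + c)%R \in A))%N.

Lemma graph_count_le_card m c : (graph_count m c <= #|A|)%N.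
Proof. by rewrite -sum1_card; apply: leq_sum => x _; apply: leq_b1. Qed.

Lemma incid_vline c : incid A (vline c) = ((c \in A) * #|A|)%N.
Proof.
rewrite /incid; have [cA | cNA] := boolP (c \in A).
- have -> : vline c :&: setX A A = [set (c, y) | y in A].
    apply/setP => -[x y]; rewrite !inE mem_vline /=; apply/idP/imsetP.
    + by case/andP => /eqP -> /andP [_ yA]; exists y.
    + by move=> [y' yA [-> ->]]; rewrite eqxx cA yA.
  by rewrite card_imset ?mul1n // => y1 y2 [].
- rewrite mul0n; apply/eqP; rewrite cards_eq0; apply/eqP/setP => -[x y].
  rewrite !inE mem_vline /=; apply/negP => /andP [/eqP -> /andP [cA _]].
  by rewrite cA in cNA.
Qed.

Lemma incid_graph_line m c : incid A (graph_line m c) = graph_count m c.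
Proof.
rewrite /incid; have -> : graph_line m c :&: setX A A =
          [set (x, m * x + c) | x in [set x in A | m * x + c \in A]].
  apply/setP => -[x y]; rewrite !inE mem_graph_line /=; apply/idP/imsetP.
  + by case/andP => /eqP -> /andP [xA yA]; exists x; rewrite // inE xA yA.
  + by move=> [x' + [-> ->]]; rewrite !inE eqxx.
rewrite card_imset => [|x1 x2 [] //].
by rewrite -sum1dep_card big_mkcondr /=; apply: eq_bigr => x _; case: (_ \in A).
Qed.

Lemma collinear_triplesE :
  collinear_triples A = (#|A| ^ 4 + \sum_(mc : F * F) graph_count mc.1 mc.2 ^ 3)%N.
Proof.
rewrite /collinear_triples linesE.
set V := [set vline _ | _ : F]; set G := [set graph_line _ _ | _ : F * F].
rewrite (eq_bigl [predU V & G]) => [|L]; last by rewrite !inE.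
rewrite bigU /=; last first.
  rewrite -setI_eq0; apply/eqP/setP => L; rewrite !inE.
  apply/negP => /andP [/imsetP [c _ ->] /imsetP [[m d] _ /eqP]].
  by rewrite (negbTE (vline_neq_graph_line _ _ _)).
rewrite big_imset /=; last by move=> c1 c2 _ _ /vline_inj.
rewrite big_imset /=; last by move=> mc1 mc2 _ _ /graph_line_inj.
congr (_ + _)%N; last by apply: eq_bigr => mc _; rewrite incid_graph_line.
transitivity (\sum_(c in A) #|A| ^ 3)%N; last by rewrite sum_nat_const -expnS.
rewrite [RHS]big_mkcond; apply: eq_bigr => c _.
by rewrite incid_vline; case: (c \in A); rewrite ?mul1n ?mul0n.
Qed.

Lemma sum_affine_mem x :
  (\sum_(mc : F * F) ((mc.1 * x + mc.2)%R \in A))%N = (#|F| * #|A|)%N.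
Proof.
have shift_inj : injective (fun mc : F * F => (mc.1, mc.2 - mc.1 * x)).
  by move=> [m c] [m' c'] /= [-> /addIr ->].
rewrite (reindex_inj shift_inj) -cardsT -cardsX -sum_mem_card.
by apply: eq_bigr => -[m c] _; rewrite /= addrC subrK !inE.
Qed.

Lemma sum_affine_mem2 x y : x != y ->
  (\sum_(mc : F * F) ((mc.1 * x + mc.2)%R \in A) * ((mc.1 * y + mc.2)%R \in A))%N
  = (#|A| ^ 2)%N.
Proof.
move=> x_neq_y.
have eval_inj : injective (fun mc : F * F => (mc.1 * x + mc.2, mc.1 * y + mc.2)).
  move=> [m c] [m' c'] /= [ex ey].
  have : (m - m') * (x - y) = (m * x + c - (m' * x + c')) - (m * y + c - (m' * y + c')).
    by ring.
  rewrite ex ey !subrr => /eqP; rewrite mulf_eq0 !subr_eq0 (negbTE x_neq_y) orbF => /eqP m_eq.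
  by move: ex; rewrite m_eq => /addrI ->.
rewrite -mulnn -cardsX -sum_mem_card [RHS](reindex_inj eval_inj).
by apply: eq_bigr => -[m c] _; rewrite !inE mulnb.
Qed.

Lemma sum_graph_count : (\sum_(mc : F * F) graph_count mc.1 mc.2)%N = (#|F| * #|A| ^ 2)%N.
Proof.
rewrite /graph_count exchange_big /=.
under eq_bigr do rewrite sum_affine_mem.
by rewrite sum_nat_const mulnCA -mulnn.
Qed.

Lemma sum_graph_count_sqr :
  (\sum_(mc : F * F) graph_count mc.1 mc.2 ^ 2 + #|A| ^ 3)%N = (#|F| * #|A| ^ 2 + #|A| ^ 4)%N.
Proof.
rewrite /graph_count.
under eq_bigr do rewrite expnS expn1 big_distrlr /=.
rewrite exchange_big /=; under eq_bigr do rewrite exchange_big /=.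
have -> : (#|A| ^ 3 = \sum_(x in A) #|A| ^ 2)%N by rewrite sum_nat_const -expnS.
have -> : (#|F| * #|A| ^ 2 + #|A| ^ 4 = \sum_(x in A) (#|F| * #|A| + #|A| ^ 3))%N.
  by rewrite sum_nat_const mulnDr mulnCA mulnn -expnS.
rewrite -big_split /=.
apply: eq_bigr => x xA; rewrite (bigD1 x xA) /=.
under eq_bigr do rewrite mulnb andbb.
rewrite sum_affine_mem -addnA; congr (_ + _)%N.
rewrite [RHS]expnS -sum_nat_const [RHS](bigD1 x xA) addnC /=; congr (_ + _)%N.
by apply: eq_bigr => y /andP [_ y_neq_x]; rewrite sum_affine_mem2 // eq_sym.
Qed.

End Lines.

Lemma collinear_triples_near_mean (F : finFieldType) (A : {set F}) :
  `| (collinear_triples A)%:R - ((#|A|%:R ^+ 6) / #|F|%:R + 2 * #|A|%:R ^+ 4) : rat |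
    <= #|F|%:R * #|A|%:R ^+ 3.
Proof.
set q : rat := #|F|%:R; set N : rat := #|A|%:R.
pose u (mc : F * F) : rat := (graph_count A mc.1 mc.2)%:R.
have moment k : \sum_mc u mc ^+ k = (\sum_(mc : F * F) graph_count A mc.1 mc.2 ^ k)%N%:R.
  by rewrite natr_sum; apply: eq_bigr => mc _; rewrite natrX.
have q_gt0 : 0 < q by rewrite ltr0n; apply/card_gt0P; exists 0.
have N_leq : N <= q by rewrite ler_nat max_card.
rewrite collinear_triplesE natrD natrX -moment -/N.
rewrite (_ : _ - _ = \sum_mc u mc ^+ 3 - (N ^+ 6 / q + N ^+ 4)); last by ring.
apply: sum_cubes_near_mean => //.
- by move=> mc; rewrite /u ler_nat graph_count_le_card.
- by rewrite card_prod natrM expr2.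
- by rewrite moment sum_graph_count natrM natrX.
- move/(congr1 (fun n => n%:R : rat)): (sum_graph_count_sqr A).
  by rewrite moment !(natrD, natrM, natrX) -/q -/N => <-; rewrite addrK.
Qed.

Theorem mainTheorem3 (p : nat) (hp : prime p) (hodd : odd p) (A : {set 'F_p}) :
  `| (collinear_triples A)%:R - ((#|A|%:R ^+ 6) / p%:R + 2 * #|A|%:R ^+ 4) : rat |
    <= p%:R * #|A|%:R ^+ 3.
Proof. by rewrite -[in p%:R](card_Fp hp); apply: collinear_triples_near_mean. Qed.
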